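(* Let $K_1,K_2$ be infinite compact Hausdorff spaces. Then $C(K_1\times K_2)$ fails the ball fixed point property.
   Context: $C(K)$ is the real Banach space of continuous functions $K\to\mathbb{R}$ with the sup norm. A real Banach space $X$ has the ball fixed point property (BFPP) if every nonexpansive map $T\colon B_X\to B_X$ (i.e. $\|Tx-Ty\|\le\|x-y\|$) has a fixed point, where $B_X$ is the closed unit ball. *)

From HB Require Import structures.
From mathcomp Require Import all_boot all_order all_algebra.
From mathcomp Require Import all_classical all_reals all_analysis.
Set Implicit Arguments. Unset Strict Implicit. Unset Printing Implicit Defensive.
Import Order.TTheory GRing.Theory Num.Theory.
Import numFieldTopology.Exports numFieldNormedType.Exports.
Local Open Scope classical_set_scope.
Local Open Scope ring_scope.

(* C(K): real-valued continuous functions on K (elements of C(K) are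
   represented by continuous functions K -> R; equality is pointwise). *)
Definition CK (R : realType) (K : topologicalType) : set (K -> R) :=
  [set f : K -> R | continuous f].

Definition supnorm (R : realType) (K : topologicalType) (f : K -> R) : R :=
  sup [set `|f x| | x in [set: K]].

Definition unit_ball (R : realType) (K : topologicalType) : set (K -> R) :=
  [set f | @CK R K f /\ supnorm f <= 1].

Definition nonexpansive_on_ball (R : realType) (K : topologicalType)
    (T : (K -> R) -> (K -> R)) : Prop :=
  (forall f, @unit_ball R K f -> @unit_ball R K (T f)) /\
  (forall f g, @unit_ball R K f -> @unit_ball R K g ->
     supnorm (fun x => T f x - T g x) <= supnorm (fun x => f x - g x)).

Definition BFPP_C (R : realType) (K : topologicalType) : Prop :=
  forall T : (K -> R) -> (K -> R), nonexpansive_on_ball T ->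
    exists f, @unit_ball R K f /\ T f = f.

(** An infinite compact Hausdorff space carries a continuous real function [a]
    that is not locally constant at some point [x]. Otherwise level sets of
    continuous functions are clopen, so by Urysohn's lemma every infinite clopen
    set splits off an infinite clopen proper subset; iterating gives a strictly
    decreasing chain of clopen sets, and the function equal to [1/(n+1)] on the
    [n]-th shell of the chain is continuous but not locally constant at a cluster
    point of a sequence meeting every shell.
    With such [(a, x)] on [K1] and [(b, y)] on [K2], let
    [h (s, t) = |a s - a x| - |b t - b y|]. Truncating to [[-1, 1]], the map
    [f |-> clip (f + h)] is a nonexpansive self-map of the unit ball of
    [C(K1 * K2)]. A fixed point equals [1] where [h > 0] and [-1] where [h < 0],
    and both regions accumulate at [(x, y)], contradicting continuity. *)

From HB Require Import structures.
From mathcomp Require Import all_boot all_order all_algebra.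
From mathcomp Require Import all_classical all_reals all_analysis.
From mathcomp Require Import lra.
Set Implicit Arguments. Unset Strict Implicit. Unset Printing Implicit Defensive.
Import Order.TTheory GRing.Theory Num.Theory.
Import numFieldTopology.Exports numFieldNormedType.Exports.
Local Open Scope classical_set_scope.
Local Open Scope ring_scope.

Section SupNorm.
Variables (R : realType) (K : topologicalType).

Lemma supnorm_le (f : K -> R) (M : R) (x0 : K) :
  (forall x, `|f x| <= M) -> supnorm f <= M.
Proof. by move=> fM; apply: ge_sup => [|_ [y _ <-]]; first by exists `|f x0|, x0. Qed.

Hypothesis cK : compact [set: K].

Lemma continuous_compact_bounded (f : K -> R) :
  continuous f -> exists M, forall x, `|f x| <= M.
Proof.
move=> cf; have : compact (f @` [set: K]).
  by apply: continuous_compact => //; exact: continuous_subspaceT.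
move/compact_bounded => [M [_ HM]].
by exists (M + 1) => x; apply: HM; [rewrite ltrDl | exists x].
Qed.

Lemma ler_supnorm (f : K -> R) : continuous f -> forall x, `|f x| <= supnorm f.
Proof.
move=> cf x; have [M fM] := continuous_compact_bounded cf.
apply: sup_upper_bound; last by exists x.
by split; [exists `|f x|, x | exists M => _ [y _ <-]].
Qed.

End SupNorm.

Section Clip.
Variable R : realType.

Definition clip (u : R) : R := if u <= -1 then -1 else if 1 <= u then 1 else u.

Lemma clip_lipschitz (u v : R) : `|clip u - clip v| <= `|u - v|.
Proof.
have := ler_norm (u - v); have := ler_norm (v - u); rewrite distrC => h1 h2.
rewrite /clip; case: ifP => Hu; case: ifP => Hv; rewrite ?subrr ?normr0 //;
  try (case: ifP => Hv'); try (case: ifP => Hu');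
  rewrite ?subrr ?normr0 // ler_norml; apply/andP; split; lra.
Qed.

Lemma norm_clip_le1 (u : R) : `|clip u| <= 1.
Proof.
rewrite /clip; case: ifP => H1; [|case: ifP => H2]; rewrite ?normrN ?normr1 //.
by rewrite ler_norml; apply/andP; split; lra.
Qed.

Lemma continuous_clip (K : topologicalType) (u : K -> R) :
  continuous u -> continuous (clip \o u).
Proof.
move=> cu p; apply/cvgrPdist_lt => e e0.
move/cvgrPdist_lt: (cu p) => /(_ e e0); apply: filterS => q.
exact: le_lt_trans (clip_lipschitz _ _).
Qed.

Lemma clip_fixed_pos (u v : R) : `|u| <= 1 -> clip (u + v) = u -> 0 < v -> u = 1.
Proof.
rewrite ler_norml /clip => /andP[? ?]; case: ifP => ?; first lra.
by case: ifP => // ? ?; lra.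
Qed.

Lemma clip_fixed_neg (u v : R) : `|u| <= 1 -> clip (u + v) = u -> v < 0 -> u = -1.
Proof.
rewrite ler_norml /clip => /andP[? ?]; case: ifP => // /negbT; rewrite -ltNge => ?.
by case: ifP => ? ?; lra.
Qed.

End Clip.

Section ClopenChain.
Variables (R : realType) (K : topologicalType) (E : nat -> set K).
Hypotheses (E0 : E 0%N = setT) (clopenE : forall n, clopen (E n))
  (ESn : forall n, E n.+1 `<=` E n).

Definition chain_shell n := E n `&` ~` E n.+1.

Lemma chain_subset n m : (n <= m)%N -> E m `<=` E n.
Proof.
move=> /subnK <-; elim: (m - n)%N => [|k IH]; first by rewrite add0n.
by rewrite addSn; apply: subset_trans IH.
Qed.

Lemma chain_shell_inj n m z : chain_shell n z -> chain_shell m z -> n = m.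
Proof.
move=> [Enz nEnz] [Emz nEmz].
have [nm|mn|//] := ltngtP n m; first by case: nEnz; exact: chain_subset nm _ Emz.
by case: nEmz; exact: chain_subset mn _ Enz.
Qed.

Lemma chain_shell_or_core z : (forall n, E n z) \/ exists n, chain_shell n z.
Proof.
have [|/existsNP [m nEm]] := pselect (forall n, E n z); [by left | right].
elim: m nEm => [|m IH] nEm; first by case: nEm; rewrite E0.
by have [Emz|/IH] := pselect (E m z); [exists m|].
Qed.

Lemma open_chain_shell n : open (chain_shell n).
Proof. by apply: openI; [|rewrite openC]; [exact: (clopenE n).1 | exact: (clopenE n.+1).2]. Qed.

(* [projT1 (cid e)] is the (unique) index of the shell containing [z]. *)
Definition chain_level (z : K) : R :=
  if pselect (exists n, chain_shell n z) is left e
  then ((projT1 (cid e)).+1%:R)^-1 else 0.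

Lemma chain_level_shell n z : chain_shell n z -> chain_level z = (n.+1%:R)^-1.
Proof.
move=> Dnz; rewrite /chain_level; case: pselect => [e|]; last by case; exists n.
by case: cid => m /= Dmz; rewrite (chain_shell_inj Dmz Dnz).
Qed.

Lemma chain_level_core z : (forall n, E n z) -> chain_level z = 0.
Proof.
move=> Ez; rewrite /chain_level; case: pselect => [[n [_ /(_ (Ez _))]]|] //.
Qed.

Lemma continuous_chain_level : continuous chain_level.
Proof.
move=> z; apply/cvgrPdist_lt => e e0.
have [Ez | [n Dnz]] := chain_shell_or_core z; last first.
  apply: filterS (open_nbhs_nbhs (conj (open_chain_shell n) Dnz)) => w Dnw.
  by rewrite (chain_level_shell Dnz) (chain_level_shell Dnw) subrr normr0.
have [N] := ltr_add_invr e0; rewrite add0r => Ne.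
have ENz : open_nbhs z (E N) by split; [exact: (clopenE N).1 | exact: Ez].
apply: filterS (open_nbhs_nbhs ENz) => w ENw.
rewrite (chain_level_core Ez) sub0r normrN.
have [Ew|[m Dmw]] := chain_shell_or_core w; first by rewrite chain_level_core ?normr0.
have Nm : (N <= m)%N by rewrite leqNgt; apply/negP => /chain_subset /(_ _ ENw); case: Dmw.
rewrite (chain_level_shell Dmw) ger0_norm ?invr_ge0 ?ler0n //; apply: le_lt_trans Ne.
by rewrite lef_pV2 ?ler_nat ?posrE ?ltr0Sn.
Qed.

Hypotheses (cK : compact [set: K]) (chain_shell_neq0 : forall n, chain_shell n !=set0).

Lemma chain_level_not_locally_constant :
  exists x, ~ \forall y \near x, chain_level y = chain_level x.
Proof.
have [p Dp] : exists p : nat -> K, forall n, chain_shell n (p n).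
  by have [p Hp] := choice chain_shell_neq0; exists p.
have [q [_ clq]] := cK (fmap_proper_filter p eventually_filter) filterT.
exists q => lq.
have tail N : (p @ \oo) [set p m | m in [set m | (N <= m)%N]].
  by exists N => // m /= Nm; exists m.
have [_ [[m1 _ <-] /= e1]] := clq _ _ (tail 0%N) lq.
have [_ [[m2 m12 <-] /= e2]] := clq _ _ (tail m1.+1) lq.
move: e2; rewrite -e1 (chain_level_shell (Dp m1)) (chain_level_shell (Dp m2)).
move/invr_inj/eqP; rewrite eqr_nat eqSS => /eqP m21.
by move: m12; rewrite /= m21 ltnn.
Qed.

End ClopenChain.

Section InfiniteCompact.
Variables (R : realType) (K : topologicalType).
Hypotheses (cK : compact [set: K]) (hK : hausdorff_space K).

Lemma continuous_separation (x y : K) :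
  x <> y -> exists a : K -> R, continuous a /\ a x <> a y.
Proof.
move=> xy.
have cr : completely_regular_space K.
  exact: normal_completely_regular (compact_normal hK cK) (hausdorff_accessible hK).
have us : uniform_separator [set x] [set y].
  by apply: cr; [exact/accessible_closed_set1/hausdorff_accessible | exact: xy].
pose u := @Urysohn K R [set x] [set y].
exists u; split; first exact: Urysohn_continuous.
have -> : u x = 0 by apply: (Urysohn_sub0 us); exists x.
have -> : u y = 1 by apply: (Urysohn_sub1 us); exists y.
by move/eqP; rewrite eq_sym oner_eq0.
Qed.

Section LocallyConstant.
Hypothesis loc_const : forall a : K -> R, continuous a ->
  forall x, \forall y \near x, a y = a x.

Lemma clopen_level_set (a : K -> R) (c : R) : continuous a -> clopen [set z | a z = c].
Proof.
move=> ca; split; last rewrite -openC; rewrite openE => z /= azc;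
  by apply: filterS (loc_const ca z) => w /= ->.
Qed.

Lemma infinite_clopen_split (E : set K) : clopen E -> infinite_set E ->
  exists E', [/\ clopen E', infinite_set E', E' `<=` E & exists z, E z /\ ~ E' z].
Proof.
move=> cE iE.
have [x Ex] : E !=set0.
  by apply/set0P/eqP => E0; apply: iE; rewrite E0; exact: finite_set0.
have [y [Ey yx]] : exists y, E y /\ x <> y.
  apply: contrapT => nE; apply: iE; apply: (sub_finite_set _ (finite_set1 x)) => z Ez.
  by apply: contrapT => zx; apply: nE; exists z; split => // xz; apply: zx.
have [a [ca axy]] := continuous_separation yx.
pose C := [set z | a z = a x].
have cC : clopen C by exact: clopen_level_set.
have [fin_EC|inf_EC] := pselect (finite_set (E `&` C)).
  exists (E `&` ~` C); split.
  - exact: clopenI cE (clopenC set0 cC).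
  - move=> fin_ECc; apply: iE; rewrite -(setIT E) -(setUv C) setIUr.
    by rewrite finite_setU.
  - by move=> z [].
  - by exists x; split => // -[_]; apply.
exists (E `&` C); split => //; first exact: clopenI.
by exists y; split => // -[_ /esym].
Qed.

Lemma infinite_clopen_chain : infinite_set [set: K] ->
  exists E : nat -> set K, [/\ E 0%N = setT, forall n, clopen (E n),
    forall n, E n.+1 `<=` E n & forall n, chain_shell E n !=set0].
Proof.
move=> iK; pose good (E : set K) := clopen E /\ infinite_set E.
have /choice [g Hg] : forall E, exists E', good E ->
    [/\ good E', E' `<=` E & exists z, E z /\ ~ E' z].
  move=> E; have [[cE iE]|] := pselect (good E); last by exists E.
  by have [E' [? ? ? ?]] := infinite_clopen_split cE iE; exists E'.
pose E n := iter n g setT.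
have goodE n : good (E n) by elim: n => [|n /Hg[]//]; split; [exact: clopenT|].
exists E; split => // n; first exact: (goodE n).1.
- by have [] := Hg _ (goodE n).
- by have [_ _ [z Ez]] := Hg _ (goodE n); exists z.
Qed.

Lemma locally_constant_finite : finite_set [set: K].
Proof.
apply: contrapT => /infinite_clopen_chain [E [E0 clopenE ESn shellE]].
have [x] := chain_level_not_locally_constant R ESn cK shellE.
by apply; apply: loc_const; exact: continuous_chain_level E0 clopenE ESn.
Qed.

End LocallyConstant.

Lemma exists_continuous_not_locally_constant : infinite_set [set: K] ->
  exists (a : K -> R) x, continuous a /\
    forall U, nbhs x U -> exists2 y, U y & a y != a x.
Proof.
move=> iK; apply: contrapT => nE; apply: iK; apply: locally_constant_finite => a ca x.
apply: contrapT => nloc; apply: nE; exists a, x; split => // U xU.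
apply: contrapT => nU; apply: nloc; apply: filterS xU => z Uz.
by apply/eqP; apply: contrapT => /negP ne; apply: nU; exists z.
Qed.

End InfiniteCompact.

Lemma continuous_at_no_jump (R : realType) (T : topologicalType) (f : T -> R) (p : T) :
  {for p, continuous f} ->
  ~ (forall W, nbhs p W -> exists u v, [/\ W u, W v, f u = 1 & f v = -1]).
Proof.
move=> /cvgrPdist_lt /(_ 1 ltr01) fp /(_ _ fp) [u [v [fpu fpv fu1 fv1]]].
by move: fpu fpv; rewrite fu1 fv1 !ltr_norml => /andP[? ?] /andP[? ?]; lra.
Qed.

Section ClipShift.
Variables (R : realType) (K : topologicalType) (h : K -> R).
Hypotheses (cK : compact [set: K]) (ch : continuous h).

Definition clip_shift (f : K -> R) (p : K) : R := clip (f p + h p).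

Lemma nonexpansive_clip_shift (x0 : K) : nonexpansive_on_ball clip_shift.
Proof.
split=> [f [cf _] | f g [cf _] [cg _]].
  split; last by apply: (@supnorm_le _ _ _ _ x0) => p; exact: norm_clip_le1.
  by apply: continuous_clip => p; apply: cvgD; [exact: cf|exact: ch].
apply: (@supnorm_le _ _ _ _ x0) => p; apply: le_trans (clip_lipschitz _ _) _.
have cfg : continuous (fun p => f p - g p).
  by move=> q; apply: cvgB; [exact: cf|exact: cg].
apply: le_trans (ler_supnorm cK cfg p).
by rewrite opprD addrA addrAC addrK.
Qed.

Lemma clip_shift_fixed f p : unit_ball f -> clip_shift f = f ->
  (0 < h p -> f p = 1) /\ (h p < 0 -> f p = -1).
Proof.
move=> [cf nf] /(congr1 (@^~ p)) fix_p.
have fp1 : `|f p| <= 1 := le_trans (ler_supnorm cK cf p) nf.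
by split; [exact: clip_fixed_pos fp1 fix_p | exact: clip_fixed_neg fp1 fix_p].
Qed.

End ClipShift.

Theorem mainTheorem4 (R : realType) (K1 K2 : topologicalType) :
  compact [set: K1] -> hausdorff_space K1 -> infinite_set [set: K1] ->
  compact [set: K2] -> hausdorff_space K2 -> infinite_set [set: K2] ->
  ~ BFPP_C R (K1 * K2)%type.
Proof.
move=> c1 h1 i1 c2 h2 i2 bfpp.
have [a [x [ca ax]]] := exists_continuous_not_locally_constant R c1 h1 i1.
have [b [y [cb byy]]] := exists_continuous_not_locally_constant R c2 h2 i2.
have cK : compact [set: (K1 * K2)%type] by rewrite -setXTT; exact: compact_setX.
pose h p := `|a p.1 - a x| - `|b p.2 - b y|.
have ch : continuous h.
  move=> p; apply: cvgB; apply: cvg_norm; apply: cvgB; try exact: cvg_cst.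
    by apply: continuous_comp; [exact: cvg_fst | exact: ca].
  by apply: continuous_comp; [exact: cvg_snd | exact: cb].
have [f [fB Tf]] := bfpp _ (nonexpansive_clip_shift cK ch (x, y)).
apply: (continuous_at_no_jump (fB.1 (x, y))) => W [[U V] /= [nU nV] UV].
have [s Us asx] := ax U nU; have [t Vt bty] := byy V nV.
exists (s, y), (x, t); split.
- by apply: UV; split => //; exact: nbhs_singleton.
- by apply: UV; split => //; exact: nbhs_singleton.
- apply: (clip_shift_fixed cK (s, y) fB Tf).1.
  by rewrite /h /= subrr normr0 subr0 normr_gt0 subr_eq0.
- apply: (clip_shift_fixed cK (x, t) fB Tf).2.
  by rewrite /h /= subrr normr0 sub0r oppr_lt0 normr_gt0 subr_eq0.
Qed.
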